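(* Let $X$ be a finite dimensional real Hilbert space and $\bar{x}\in X$. Let $H_{1}\subset X$ be a closed halfspace and $x_{1}=P_{H_{1}}(\bar{x})$. Let $H_{2}\subset X$ be a closed halfspace with $H_{1}\cap H_{2}\neq\emptyset$, let $d=d(x_{1},H_{2})$, and let $x_{2}=P_{H_{1}\cap H_{2}}(\bar{x})$. Then $\|\bar{x}-x_{2}\|^{2}\geq\|\bar{x}-x_{1}\|^{2}+d^{2}$.
   Context: $P_{S}(y)$ denotes the (metric) projection of $y$ onto a nonempty closed convex set $S$, and $d(y,S)=\inf_{s\in S}\|y-s\|$. *)

From mathcomp Require Import all_boot all_order all_algebra.
From mathcomp Require Import all_classical all_reals.
Set Implicit Arguments. Unset Strict Implicit. Unset Printing Implicit Defensive.
Import Order.TTheory GRing.Theory Num.Theory.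
Local Open Scope ring_scope.
Local Open Scope classical_set_scope.

(* The finite-dimensional real Hilbert space X is modelled as R^n = 'rV[R]_n
   with the standard (Euclidean) inner product. *)
Definition dotv (R : realType) (n : nat) (u v : 'rV[R]_n) : R :=
  \sum_(i < n) u 0 i * v 0 i.

Definition enorm (R : realType) (n : nat) (u : 'rV[R]_n) : R :=
  Num.sqrt (dotv u u).

Definition closed_halfspace (R : realType) (n : nat) (H : set 'rV[R]_n) : Prop :=
  exists (a : 'rV[R]_n) (b : R), a != 0 /\ H = [set x | dotv a x <= b].

Definition dist_set (R : realType) (n : nat) (y : 'rV[R]_n) (S : set 'rV[R]_n) : R :=
  inf [set enorm (y - s) | s in S].

(* p = P_S(y): p is the (metric) projection of y onto S, i.e. p in S is a
   nearest point of S to y (unique when S is nonempty closed convex). *)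
Definition is_proj (R : realType) (n : nat) (S : set 'rV[R]_n) (y p : 'rV[R]_n) : Prop :=
  S p /\ forall s, S s -> enorm (y - p) <= enorm (y - s).

(* The projection x1 of xbar onto the convex set H1 satisfies the variational
   inequality <xbar - x1, y - x1> <= 0 for every y in H1, which is the
   obtuse-angle form of Pythagoras: |xbar - y|^2 >= |xbar - x1|^2 + |y - x1|^2.
   Applied to y = x2, which lies in H1 and in H2, and combined with
   d(x1, H2) <= |x2 - x1|, this gives the claim. *)
From mathcomp Require Import all_boot all_order all_algebra.
From mathcomp Require Import all_classical all_reals.
From mathcomp Require Import ring lra.
Set Implicit Arguments. Unset Strict Implicit. Unset Printing Implicit Defensive.
Import Order.TTheory GRing.Theory Num.Theory.
Local Open Scope ring_scope.
Local Open Scope classical_set_scope.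

Lemma le0_if_le_small_multiples (R : realFieldType) (c q : R) :
  0 <= q -> (forall t, 0 < t < 1 -> c <= t * q) -> c <= 0.
Proof.
move=> q_ge0 le_cq; rewrite leNgt; apply/negP => c_gt0.
have cq_gt0 : 0 < c + c + q by lra.
(* t q = c - 2 t c < c for this t *)
pose t := c / (c + c + q).
have tE : t * (c + c + q) = c by rewrite mulfVK // gt_eqF.
have t_gt0 : 0 < t by rewrite divr_gt0.
have t_lt1 : t < 1 by rewrite ltr_pdivrMr // mul1r; lra.
have le_c : c <= t * q by apply: le_cq; rewrite t_gt0 t_lt1.
have : 0 < t * c by rewrite mulr_gt0.
nra.
Qed.

Section EuclideanGeometry.
Variables (R : realType) (n : nat).
Implicit Types (u v w y p s : 'rV[R]_n) (S : set 'rV[R]_n).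

Definition is_convex S :=
  forall x y (t : R), S x -> S y -> 0 <= t <= 1 -> S (x + t *: (y - x)).

Lemma dotvC u v : dotv u v = dotv v u.
Proof. by apply: eq_bigr => i _; rewrite mulrC. Qed.

Lemma dotvDl u v w : dotv (u + v) w = dotv u w + dotv v w.
Proof. by rewrite /dotv -big_split; apply: eq_bigr => i _; rewrite mxE mulrDl. Qed.

Lemma dotvZl (t : R) u w : dotv (t *: u) w = t * dotv u w.
Proof. by rewrite /dotv mulr_sumr; apply: eq_bigr => i _; rewrite mxE mulrA. Qed.

Lemma dotvNl u w : dotv (- u) w = - dotv u w.
Proof. by rewrite -scaleN1r dotvZl mulN1r. Qed.

Lemma dotvBl u v w : dotv (u - v) w = dotv u w - dotv v w.
Proof. by rewrite dotvDl dotvNl. Qed.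

Lemma dotvDr u v w : dotv w (u + v) = dotv w u + dotv w v.
Proof. by rewrite dotvC dotvDl !(dotvC w). Qed.

Lemma dotvBr u v w : dotv w (u - v) = dotv w u - dotv w v.
Proof. by rewrite dotvC dotvBl !(dotvC w). Qed.

Lemma dotvZr (t : R) u w : dotv w (t *: u) = t * dotv w u.
Proof. by rewrite dotvC dotvZl dotvC. Qed.

Lemma dotvv_ge0 u : 0 <= dotv u u.
Proof. by apply: sumr_ge0 => i _; rewrite -expr2 sqr_ge0. Qed.

Lemma enorm_ge0 u : 0 <= enorm u.
Proof. exact: sqrtr_ge0. Qed.

Lemma enorm_sqr u : enorm u ^+ 2 = dotv u u.
Proof. by rewrite sqr_sqrtr // dotvv_ge0. Qed.

Lemma enormN u : enorm (- u) = enorm u.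
Proof. by rewrite /enorm dotvNl dotvC dotvNl opprK. Qed.

Lemma enorm_sqr_le u v : enorm u <= enorm v -> enorm u ^+ 2 <= enorm v ^+ 2.
Proof. by move=> le_uv; rewrite lerXn2r // nnegrE enorm_ge0. Qed.

Lemma enormBZ_sqr u v (t : R) :
  enorm (u - t *: v) ^+ 2 = enorm u ^+ 2 - 2 * t * dotv u v + t ^+ 2 * enorm v ^+ 2.
Proof. by rewrite !enorm_sqr dotvBl !dotvBr !dotvZl !dotvZr (dotvC v u); ring. Qed.

Lemma halfspace_convex (a : 'rV[R]_n) (b : R) : is_convex [set x | dotv a x <= b].
Proof.
move=> x y t /= ax_le ay_le /andP[t_ge0 t_le1].
rewrite dotvDr dotvZr dotvBr; nra.
Qed.

Lemma closed_halfspace_convex S : closed_halfspace S -> is_convex S.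
Proof. by move=> [a [b [_ ->]]]; apply: halfspace_convex. Qed.

(* Moving from p towards s stays in S, so the distance to y cannot decrease:
   |w|^2 <= |w - t v|^2 for small t > 0 forces <w, v> <= 0. *)
Lemma proj_dotv_le0 S y p s :
  is_convex S -> is_proj S y p -> S s -> dotv (y - p) (s - p) <= 0.
Proof.
move=> cvxS [Sp p_min] Ss.
set w := y - p; set v := s - p.
suff : 2 * dotv w v <= 0 by lra.
apply: (le0_if_le_small_multiples (dotvv_ge0 v)) => t /andP[t_gt0 t_lt1].
have Spt : S (p + t *: v) by apply: cvxS Sp Ss _; rewrite !ltW.
have := enorm_sqr_le (p_min _ Spt).
have -> : y - (p + t *: v) = w - t *: v by rewrite opprD addrA.
rewrite enormBZ_sqr -enorm_sqr => le_w.
have : t * (2 * dotv w v) <= t * (t * enorm v ^+ 2) by nra.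
by rewrite ler_pM2l.
Qed.

Lemma proj_pythagoras S y p s : is_convex S -> is_proj S y p -> S s ->
  enorm (y - p) ^+ 2 + enorm (p - s) ^+ 2 <= enorm (y - s) ^+ 2.
Proof.
move=> cvxS projp Ss; have := proj_dotv_le0 cvxS projp Ss.
have -> : y - s = (y - p) - 1 *: (s - p) by rewrite scale1r opprB addrA subrK.
by rewrite enormBZ_sqr expr1n mulr1 mul1r -(opprB s p) enormN; lra.
Qed.

Lemma dist_set_ge0 y S : 0 <= dist_set y S.
Proof.
have [->|/set0P[s Ss]] := eqVneq S set0; first by rewrite /dist_set image_set0 inf0.
by apply: lb_le_inf; [exists (enorm (y - s)), s | move=> _ [x _ <-]; apply: enorm_ge0].
Qed.

Lemma dist_set_le y S s : S s -> dist_set y S <= enorm (y - s).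
Proof.
move=> Ss; apply: ge_inf; last by exists s.
by exists 0 => _ [x _ <-]; apply: enorm_ge0.
Qed.

End EuclideanGeometry.

Theorem lemma2p5 (R : realType) (n : nat) (xbar : 'rV[R]_n)
  (H1 H2 : set 'rV[R]_n) (x1 x2 : 'rV[R]_n) :
  closed_halfspace H1 ->
  is_proj H1 xbar x1 ->
  closed_halfspace H2 ->
  H1 `&` H2 !=set0 ->
  is_proj (H1 `&` H2) xbar x2 ->
  enorm (xbar - x2) ^+ 2 >= enorm (xbar - x1) ^+ 2 + dist_set x1 H2 ^+ 2.
Proof.
(* Of x2 only its membership in H1 and H2 matters; H2 need not be a halfspace. *)
move=> /closed_halfspace_convex cvx1 proj1 _ _ [[H1x2 H2x2] _].
have := proj_pythagoras cvx1 proj1 H1x2.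
have : dist_set x1 H2 ^+ 2 <= enorm (x1 - x2) ^+ 2.
  by rewrite lerXn2r ?nnegrE ?enorm_ge0 ?dist_set_ge0 ?dist_set_le.
lra.
Qed.
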